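(* Let $\alpha,\beta,C,A,K,K_h,K_s>0$ be constants with $\alpha K_h>K_s$, and set $h_*=1-\frac{K_s}{\alpha K_h}>0$. For $s\ge 0$ and $\eta>0$ define \[ \hat r(\eta)=\Bigl(\frac{\beta C}{\eta}+1+\frac{\beta}{C}\eta\Bigr)^{-1},\qquad \hat v_0(\eta)=\alpha AK\eta^2-K_h, \] \[ \hat q_0(s,\eta)=\tfrac12\sqrt{\hat v_0(\eta)^2+4AK\hat r(\eta)\eta^2 s}-\tfrac12\hat v_0(\eta), \] \[ \hat f_0(s,\eta)=-\hat r(\eta)s+K_s,\qquad \hat g_0(s,\eta)=-\hat q_0(s,\eta)+K_h, \] the slow and fast components of the singular fast–slow system $\frac{ds}{dt}=\hat f_0(s,\eta)$, $\epsilon\frac{d\eta}{dt}=\hat g_0(s,\eta)$ (with $s$ slow, $\eta$ fast). Let \[ \hat{\mathcal S}_B=\{(\psi(\eta),\eta):\eta>0\},\qquad \psi(\eta)=\frac{\alpha K_h}{\hat r(\eta)}, \] which is the part of the critical manifold $\{\hat g_0=0\}$ lying in $\eta>0$. Then $\hat{\mathcal S}_B$ possesses a single fold point, namely \[ F_B=(s_B,\eta_B)=\bigl(\alpha K_h(2\beta+1),\,C\bigr), \] and this point is a generic fold point.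
   Context: For a fast–slow system $\dot x=f(x,y)$, $\epsilon\dot y=g(x,y)$ with slow variable $x$ and fast variable $y$, a point $P$ on the critical manifold $\{g=0\}$ is a fold point if $g(P)=0$ and $\partial_y g(P)=0$; it is a generic fold point if in addition $\partial_y^2 g(P)\neq 0$ and $\partial_x g(P)\neq 0$ (nondegeneracy) and $f(P)\neq 0$ (transversality of the slow flow). Here $x=s$, $y=\eta$, $f=\hat f_0$, $g=\hat g_0$. *)

From Stdlib Require Import Reals.
From Coquelicot Require Import Coquelicot.
Open Scope R_scope.

Definition rhat (beta C eta : R) : R :=
  / (beta * C / eta + 1 + beta / C * eta).

Definition v0hat (alpha A K Kh eta : R) : R :=
  alpha * A * K * eta ^ 2 - Kh.

Definition q0hat (alpha beta C A K Kh s eta : R) : R :=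
  / 2 * sqrt (v0hat alpha A K Kh eta ^ 2
              + 4 * A * K * rhat beta C eta * eta ^ 2 * s)
  - / 2 * v0hat alpha A K Kh eta.

Definition f0hat (beta C Ks s eta : R) : R := - rhat beta C eta * s + Ks.

Definition g0hat (alpha beta C A K Kh s eta : R) : R :=
  - q0hat alpha beta C A K Kh s eta + Kh.

Definition psi (alpha beta C Kh eta : R) : R := alpha * Kh / rhat beta C eta.

Definition fold_point (g : R -> R -> R) (x y : R) : Prop :=
  g x y = 0 /\
  ex_derive (fun y' => g x y') y /\ Derive (fun y' => g x y') y = 0.

Definition generic_fold_point (f g : R -> R -> R) (x y : R) : Prop :=
  fold_point g x y /\
  ex_derive_n (fun y' => g x y') 2 y /\ Derive_n (fun y' => g x y') 2 y <> 0 /\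
  ex_derive (fun x' => g x' y) x /\ Derive (fun x' => g x' y) x <> 0 /\
  f x y <> 0.

From Stdlib Require Import Reals Lra.
From Coquelicot Require Import Coquelicot.
Open Scope R_scope.

(* Put W(eta) = alpha A K eta^2 + Kh and G(s, eta) = 4 A K eta^2 (alpha Kh - rhat(eta) s).
   Then W^2 - G is exactly the radicand of q0hat, so g0hat = (W - sqrt (W^2 - G)) / 2
   with W > 0.  Such a function vanishes exactly where G does; where G = 0 its
   derivative is G' / (4 W), and where moreover G' = 0 its second derivative is
   G'' / (4 W).  On the critical manifold rhat(eta) s = alpha Kh, so d_eta G is a
   positive multiple of (1 / rhat)'(eta) = beta / C - beta C / eta^2, which vanishes
   only at eta = C.  There d_eta^2 G > 0 and d_s G < 0, while
   f0hat(F_B) = Ks - alpha Kh < 0. *)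

Lemma Derive_n_2_loc (f f' : R -> R) (x l : R) :
  locally x (fun y => is_derive f y (f' y)) -> is_derive f' x l ->
  ex_derive_n f 2 x /\ Derive_n f 2 x = l.
Proof.
  intros Hf Hf'.
  assert (HDf : is_derive (Derive f) x l).
  { apply (is_derive_ext_loc f'); [|exact Hf'].
    apply (filter_imp _ _ (fun y Hy => eq_sym (is_derive_unique _ _ _ Hy)) Hf). }
  split; [exists l; exact HDf | exact (is_derive_unique _ _ _ HDf)].
Qed.

Section SqrtGap.

Variables W G : R -> R.

Definition sqrt_gap (y : R) : R := (W y - sqrt (W y ^ 2 - G y)) / 2.

Lemma sqrt_gap_eq0 y : 0 < W y -> 0 <= W y ^ 2 - G y -> sqrt_gap y = 0 <-> G y = 0.
Proof.
  intros HW Hpos; unfold sqrt_gap; split; intros E.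
  - assert (Hsq : sqrt (W y ^ 2 - G y) = W y) by lra.
    pose proof (sqrt_sqrt _ Hpos) as Hsq2; rewrite Hsq in Hsq2.
    assert (W y ^ 2 - G y = W y ^ 2) by (rewrite <- Hsq2; ring).
    lra.
  - rewrite E, Rminus_0_r, sqrt_pow2 by lra; unfold Rdiv; ring.
Qed.

Lemma is_derive_sqrt_gap y dW dG :
  is_derive W y dW -> is_derive G y dG -> 0 < W y ^ 2 - G y ->
  is_derive sqrt_gap y ((dW - (2 * W y * dW - dG) / (2 * sqrt (W y ^ 2 - G y))) / 2).
Proof.
  intros HW HG Hpos; unfold sqrt_gap.
  replace (W y ^ 2 - G y) with (W y * (W y * 1) + - G y) in * by ring.
  auto_derive.
  - repeat split; try (eexists; eassumption); exact Hpos.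
  - do 2 (erewrite is_derive_unique by eassumption).
    field; apply Rgt_not_eq, sqrt_lt_R0, Hpos.
Qed.

Lemma is_derive_sqrt_gap_root x dW dG :
  is_derive W x dW -> is_derive G x dG -> G x = 0 -> 0 < W x ->
  is_derive sqrt_gap x (dG / (4 * W x)).
Proof.
  intros HW HG HG0 HWx.
  assert (Hsq : W x ^ 2 - G x = W x ^ 2) by (rewrite HG0; ring).
  replace (dG / (4 * W x))
    with ((dW - (2 * W x * dW - dG) / (2 * sqrt (W x ^ 2 - G x))) / 2).
  - apply is_derive_sqrt_gap; [exact HW | exact HG | rewrite Hsq; apply pow_lt, HWx].
  - rewrite Hsq, sqrt_pow2 by lra; field; lra.
Qed.

Lemma sqrt_gap_second_derivative_root (W1 G1 : R -> R) x W2 G2 :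
  locally x (fun y => is_derive W y (W1 y) /\ is_derive G y (G1 y) /\ 0 < W y ^ 2 - G y) ->
  is_derive W1 x W2 -> is_derive G1 x G2 -> G x = 0 -> G1 x = 0 -> 0 < W x ->
  ex_derive_n sqrt_gap 2 x /\ Derive_n sqrt_gap 2 x = G2 / (4 * W x).
Proof.
  intros Hloc HW1 HG1 HG0 HG10 HWx.
  apply (Derive_n_2_loc _
    (fun y => (W1 y - (2 * W y * W1 y - G1 y) / (2 * sqrt (W y ^ 2 - G y))) / 2)).
  { refine (filter_imp _ _ _ Hloc); intros y (HW & HG & Hpos).
    exact (is_derive_sqrt_gap y _ _ HW HG Hpos). }
  destruct (locally_singleton _ _ Hloc) as (HW & HG & _).
  auto_derive; replace (W x * (W x * 1) + - G x) with (W x ^ 2) by (rewrite HG0; ring);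
    rewrite sqrt_pow2 by lra.
  - repeat split; try (eexists; eassumption); try apply pow_lt; lra.
  - do 4 (erewrite is_derive_unique by eassumption).
    rewrite HG10; field; lra.
Qed.
End SqrtGap.

Section FoldComputation.

Variables alpha beta C A K Kh : R.
Hypotheses (Halpha : 0 < alpha) (Hbeta : 0 < beta) (HC : 0 < C)
  (HA : 0 < A) (HK : 0 < K) (HKh : 0 < Kh).

Definition rhat_den (eta : R) : R := beta * C / eta + 1 + beta / C * eta.

Definition rhat_den_deriv (eta : R) : R := beta / C - beta * C / eta ^ 2.

Definition crit_sqrt (eta : R) : R := alpha * A * K * eta ^ 2 + Kh.

Definition crit_gap (s eta : R) : R :=
  4 * A * K * eta ^ 2 * (alpha * Kh - rhat beta C eta * s).

Definition crit_gap_deta (s eta : R) : R :=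
  4 * A * K * (2 * eta * (alpha * Kh - rhat beta C eta * s)
               + eta ^ 2 * s * rhat_den_deriv eta * rhat beta C eta ^ 2).

Lemma rhat_den_pos eta : 0 < eta -> 0 < rhat_den eta.
Proof.
  intros Heta; unfold rhat_den.
  assert (0 < beta * C / eta) by (apply Rdiv_lt_0_compat; nra).
  assert (0 < beta / C * eta) by (apply Rmult_lt_0_compat; [apply Rdiv_lt_0_compat|]; lra).
  lra.
Qed.

Lemma rhat_pos eta : 0 < eta -> 0 < rhat beta C eta.
Proof. intros Heta; apply Rinv_0_lt_compat, rhat_den_pos, Heta. Qed.

Lemma rhat_den_deriv_eq0 eta : 0 < eta -> rhat_den_deriv eta = 0 <-> eta = C.
Proof.
  intros Heta.
  replace (rhat_den_deriv eta) with (beta * (eta - C) * (eta + C) / (C * eta ^ 2))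
    by (unfold rhat_den_deriv; field; lra).
  assert (0 < C * eta ^ 2) by (apply Rmult_lt_0_compat; [lra | apply pow_lt; lra]).
  split.
  - intros E.
    assert (Hprod : beta * (eta - C) * (eta + C) = 0).
    { apply (Rmult_eq_reg_r (/ (C * eta ^ 2))); [|apply Rinv_neq_0_compat; lra].
      rewrite Rmult_0_l; exact E. }
    destruct (Rmult_integral _ _ Hprod) as [Hprod'|]; [|lra].
    destruct (Rmult_integral _ _ Hprod'); lra.
  - intros ->; unfold Rdiv; ring.
Qed.

Lemma rhat_den_C : rhat_den C = 2 * beta + 1.
Proof. unfold rhat_den; field; lra. Qed.

Lemma psi_C : psi alpha beta C Kh C = alpha * Kh * (2 * beta + 1).
Proof. unfold psi, rhat; field; lra. Qed.

Lemma psi_pos eta : 0 < eta -> 0 < psi alpha beta C Kh eta.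
Proof.
  intros Heta; pose proof (rhat_pos eta Heta).
  apply Rdiv_lt_0_compat; [apply Rmult_lt_0_compat|]; assumption.
Qed.

Lemma rhat_mul_psi eta : 0 < eta -> rhat beta C eta * psi alpha beta C Kh eta = alpha * Kh.
Proof. intros Heta; pose proof (rhat_pos eta Heta); unfold psi; field; lra. Qed.

Lemma crit_sqrt_pos eta : 0 < crit_sqrt eta.
Proof.
  unfold crit_sqrt.
  assert (0 <= alpha * A * K * eta ^ 2).
  { apply Rmult_le_pos; [apply Rlt_le; repeat apply Rmult_lt_0_compat; lra|].
    rewrite <- Rsqr_pow2; apply Rle_0_sqr. }
  lra.
Qed.

Lemma g0hat_sqrt_gap s eta :
  g0hat alpha beta C A K Kh s eta = sqrt_gap crit_sqrt (crit_gap s) eta.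
Proof.
  unfold g0hat, q0hat, sqrt_gap, crit_sqrt, crit_gap, v0hat.
  replace ((alpha * A * K * eta ^ 2 + Kh) ^ 2
           - 4 * A * K * eta ^ 2 * (alpha * Kh - rhat beta C eta * s))
    with ((alpha * A * K * eta ^ 2 - Kh) ^ 2 + 4 * A * K * rhat beta C eta * eta ^ 2 * s)
    by ring.
  field.
Qed.

Lemma sqr_crit_sqrt_sub_gap s eta :
  crit_sqrt eta ^ 2 - crit_gap s eta
  = v0hat alpha A K Kh eta ^ 2 + 4 * A * K * rhat beta C eta * eta ^ 2 * s.
Proof. unfold crit_sqrt, crit_gap, v0hat; ring. Qed.

Lemma crit_gap_le s eta : 0 <= s -> 0 < eta -> 0 <= crit_sqrt eta ^ 2 - crit_gap s eta.
Proof.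
  intros Hs Heta; rewrite sqr_crit_sqrt_sub_gap; pose proof (rhat_pos eta Heta).
  assert (0 <= v0hat alpha A K Kh eta ^ 2) by (rewrite <- Rsqr_pow2; apply Rle_0_sqr).
  assert (0 <= 4 * A * K * rhat beta C eta * eta ^ 2 * s).
  { apply Rmult_le_pos; [|exact Hs].
    apply Rlt_le; repeat apply Rmult_lt_0_compat; try apply pow_lt; lra. }
  lra.
Qed.

Lemma crit_gap_lt s eta : 0 < s -> 0 < eta -> 0 < crit_sqrt eta ^ 2 - crit_gap s eta.
Proof.
  intros Hs Heta; rewrite sqr_crit_sqrt_sub_gap; pose proof (rhat_pos eta Heta).
  assert (0 <= v0hat alpha A K Kh eta ^ 2) by (rewrite <- Rsqr_pow2; apply Rle_0_sqr).
  assert (0 < 4 * A * K * rhat beta C eta * eta ^ 2 * s)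
    by (repeat apply Rmult_lt_0_compat; try apply pow_lt; lra).
  lra.
Qed.

Lemma crit_gap_eq0 s eta : 0 < eta -> crit_gap s eta = 0 <-> s = psi alpha beta C Kh eta.
Proof.
  intros Heta; pose proof (rhat_pos eta Heta); pose proof (rhat_mul_psi eta Heta) as Hrpsi.
  assert (0 < 4 * A * K * eta ^ 2) by (repeat apply Rmult_lt_0_compat; try apply pow_lt; lra).
  unfold crit_gap; split.
  - intros E; destruct (Rmult_integral _ _ E); [lra|].
    apply (Rmult_eq_reg_l (rhat beta C eta)); lra.
  - intros ->; rewrite Hrpsi; ring.
Qed.

Lemma g0hat_eq0 s eta : 0 <= s -> 0 < eta ->
  g0hat alpha beta C A K Kh s eta = 0 <-> s = psi alpha beta C Kh eta.
Proof.
  intros Hs Heta; rewrite g0hat_sqrt_gap, sqrt_gap_eq0, crit_gap_eq0 by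
    (exact Heta || apply crit_sqrt_pos || apply crit_gap_le; assumption).
  reflexivity.
Qed.

Lemma crit_gap_deta_psi eta : 0 < eta ->
  crit_gap_deta (psi alpha beta C Kh eta) eta
  = 4 * A * K * alpha * Kh * eta ^ 2 * rhat beta C eta * rhat_den_deriv eta.
Proof.
  intros Heta; pose proof (rhat_pos eta Heta).
  unfold crit_gap_deta, psi; field; lra.
Qed.

Lemma is_derive_crit_sqrt eta : is_derive crit_sqrt eta (2 * alpha * A * K * eta).
Proof. unfold crit_sqrt; auto_derive; [exact I | ring]. Qed.

Lemma is_derive_crit_gap_eta s eta : 0 < eta -> is_derive (crit_gap s) eta (crit_gap_deta s eta).
Proof.
  intros Heta; pose proof (rhat_den_pos eta Heta).
  unfold crit_gap, crit_gap_deta, rhat_den_deriv, rhat; fold (rhat_den eta).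
  auto_derive; change (beta * C * / eta + 1 + beta / C * eta) with (rhat_den eta).
  - repeat split; lra.
  - field; lra.
Qed.

Lemma is_derive_crit_gap_deta_C :
  is_derive (crit_gap_deta (psi alpha beta C Kh C)) C (8 * A * K * alpha * Kh * beta / (2 * beta + 1)).
Proof.
  rewrite psi_C.
  unfold crit_gap_deta, rhat_den_deriv, rhat.
  auto_derive; change (beta * C * / C + 1 + beta / C * C) with (rhat_den C); rewrite rhat_den_C.
  - repeat split; nra.
  - field; lra.
Qed.

Lemma is_derive_crit_gap_s s eta :
  is_derive (fun s' => crit_gap s' eta) s (- (4 * A * K * eta ^ 2 * rhat beta C eta)).
Proof. unfold crit_gap; auto_derive; [exact I | ring]. Qed.



Lemma is_derive_g0hat_eta_psi eta : 0 < eta ->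
  is_derive (g0hat alpha beta C A K Kh (psi alpha beta C Kh eta)) eta
    (A * K * alpha * Kh * eta ^ 2 * rhat beta C eta / crit_sqrt eta * rhat_den_deriv eta).
Proof.
  intros Heta; pose proof (crit_sqrt_pos eta).
  apply (is_derive_ext (sqrt_gap crit_sqrt (crit_gap (psi alpha beta C Kh eta)))).
  { intros t; symmetry; apply g0hat_sqrt_gap. }
  replace (A * K * alpha * Kh * eta ^ 2 * rhat beta C eta / crit_sqrt eta * rhat_den_deriv eta)
    with (crit_gap_deta (psi alpha beta C Kh eta) eta / (4 * crit_sqrt eta))
    by (rewrite crit_gap_deta_psi by exact Heta; field; lra).
  apply (is_derive_sqrt_gap_root _ _ _ (2 * alpha * A * K * eta)).
  - apply is_derive_crit_sqrt.
  - apply is_derive_crit_gap_eta, Heta.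
  - apply crit_gap_eq0; [exact Heta | reflexivity].
  - apply crit_sqrt_pos.
Qed.

Lemma g0hat_eta_second_derivative_fold :
  let g := fun eta => g0hat alpha beta C A K Kh (psi alpha beta C Kh C) eta in
  ex_derive_n g 2 C /\
  Derive_n g 2 C = 2 * A * K * alpha * Kh * beta / ((2 * beta + 1) * crit_sqrt C).
Proof.
  intros g; pose proof (g0hat_sqrt_gap (psi alpha beta C Kh C)) as Hext.
  assert (HsB : 0 < psi alpha beta C Kh C)
    by (rewrite psi_C; repeat apply Rmult_lt_0_compat; lra).
  destruct (sqrt_gap_second_derivative_root crit_sqrt (crit_gap (psi alpha beta C Kh C))
              (fun y => 2 * alpha * A * K * y) (crit_gap_deta (psi alpha beta C Kh C))
              C (2 * alpha * A * K) (8 * A * K * alpha * Kh * beta / (2 * beta + 1)))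
    as [Hex HD].
  - refine (filter_imp _ _ _ (open_gt 0 C HC)); intros y Hy.
    split; [|split].
    + apply is_derive_crit_sqrt.
    + apply is_derive_crit_gap_eta, Hy.
    + apply crit_gap_lt; assumption.
  - auto_derive; [exact I | ring].
  - apply is_derive_crit_gap_deta_C.
  - apply crit_gap_eq0; [exact HC | reflexivity].
  - rewrite crit_gap_deta_psi, (proj2 (rhat_den_deriv_eq0 C HC) eq_refl) by exact HC; ring.
  - apply crit_sqrt_pos.
  - split.
    + exact (ex_derive_n_ext _ _ 2 C (fun t => eq_sym (Hext t)) Hex).
    + rewrite (Derive_n_ext g _ 2 C Hext), HD.
      pose proof (crit_sqrt_pos C); field; lra.
Qed.

Lemma is_derive_g0hat_s_psi eta : 0 < eta ->
  is_derive (fun s => g0hat alpha beta C A K Kh s eta) (psi alpha beta C Kh eta)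
    (- (A * K * eta ^ 2 * rhat beta C eta) / crit_sqrt eta).
Proof.
  intros Heta; pose proof (crit_sqrt_pos eta) as HW.
  apply (is_derive_ext (sqrt_gap (fun _ => crit_sqrt eta) (fun s => crit_gap s eta))).
  { intros t; rewrite g0hat_sqrt_gap; reflexivity. }
  replace (- (A * K * eta ^ 2 * rhat beta C eta) / crit_sqrt eta)
    with (- (4 * A * K * eta ^ 2 * rhat beta C eta) / (4 * crit_sqrt eta)) by (field; lra).
  apply (is_derive_sqrt_gap_root (fun _ => crit_sqrt eta) (fun s => crit_gap s eta) _ 0).
  - auto_derive; [exact I | reflexivity].
  - apply is_derive_crit_gap_s.
  - apply crit_gap_eq0; [exact Heta | reflexivity].
  - exact HW.
Qed.

Lemma fold_point_psi_iff eta : 0 < eta ->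
  fold_point (g0hat alpha beta C A K Kh) (psi alpha beta C Kh eta) eta <-> eta = C.
Proof.
  intros Heta; pose proof (is_derive_g0hat_eta_psi eta Heta) as Hd.
  assert (Hc : 0 < A * K * alpha * Kh * eta ^ 2 * rhat beta C eta / crit_sqrt eta).
  { pose proof (rhat_pos eta Heta); pose proof (crit_sqrt_pos eta).
    apply Rdiv_lt_0_compat; [repeat apply Rmult_lt_0_compat; try apply pow_lt|]; lra. }
  unfold fold_point; erewrite is_derive_unique by exact Hd.
  rewrite <- (rhat_den_deriv_eq0 eta Heta); split.
  - intros (_ & _ & E); destruct (Rmult_integral _ _ E); [lra | assumption].
  - intros E; split; [|split].
    + apply g0hat_eq0; [apply Rlt_le, psi_pos | | reflexivity]; exact Heta.
    + eexists; exact Hd.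
    + rewrite E; ring.
Qed.

Lemma generic_fold_point_C Ks : Ks < alpha * Kh ->
  generic_fold_point (f0hat beta C Ks) (g0hat alpha beta C A K Kh) (psi alpha beta C Kh C) C.
Proof.
  intros HKs.
  destruct g0hat_eta_second_derivative_fold as [Hex HD].
  pose proof (is_derive_g0hat_s_psi C HC) as Hds.
  pose proof (crit_sqrt_pos C) as HW; pose proof (rhat_pos C HC).
  split; [apply fold_point_psi_iff; [exact HC | reflexivity]|].
  split; [exact Hex|].
  split.
  { cbv zeta in HD; rewrite HD.
    apply Rgt_not_eq, Rdiv_lt_0_compat; [repeat apply Rmult_lt_0_compat|
      apply Rmult_lt_0_compat]; lra. }
  split; [eexists; exact Hds|].
  split.
  { erewrite is_derive_unique by exact Hds.
    apply Rlt_not_eq, Rdiv_neg_pos; [|exact HW].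
    apply Ropp_lt_gt_0_contravar; repeat apply Rmult_lt_0_compat; try apply pow_lt; lra. }
  unfold f0hat; replace (- rhat beta C C * psi alpha beta C Kh C + Ks)
    with (Ks - rhat beta C C * psi alpha beta C Kh C) by ring.
  rewrite rhat_mul_psi by exact HC; lra.
Qed.

End FoldComputation.

Theorem proposition4 (alpha beta C A K Kh Ks : R) :
  0 < alpha -> 0 < beta -> 0 < C -> 0 < A -> 0 < K -> 0 < Kh -> 0 < Ks ->
  alpha * Kh > Ks ->
  let f := f0hat beta C Ks in
  let g := g0hat alpha beta C A K Kh in
  let sB := alpha * Kh * (2 * beta + 1) in
  let etaB := C in
  (* S_B is the part of the critical manifold {g = 0} in s >= 0, eta > 0 *)
  (forall s eta, 0 <= s -> 0 < eta -> (g s eta = 0 <-> s = psi alpha beta C Kh eta)) /\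
  (* F_B lies on S_B *)
  psi alpha beta C Kh etaB = sB /\
  (* F_B is the only fold point on S_B *)
  (forall eta, 0 < eta -> (fold_point g (psi alpha beta C Kh eta) eta <-> eta = etaB)) /\
  (* and it is a generic fold point *)
  generic_fold_point f g sB etaB.
Proof.
  intros Halpha Hbeta HC HA HK HKh _ HKs f g sB etaB.
  assert (HsB : psi alpha beta C Kh C = sB) by (apply psi_C; assumption).
  split; [|split; [|split]].
  - intros s eta Hs Heta; apply g0hat_eq0; assumption.
  - exact HsB.
  - intros eta Heta; apply fold_point_psi_iff; assumption.
  - rewrite <- HsB; apply generic_fold_point_C; assumption.
Qed.
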